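(* Fix $b>0$, $c>0$ and $0<\theta<c$, and let the parameter $a\in\mathbb R$ vary. Consider the two-player complete-information contest with efforts $x,y\ge 0$, payoffs $P(x,y)-\theta x$ and $1-P(x,y)-\theta y$, where $P(x,y)=\tfrac12+(x-y)\bigl(c-b(x+y)+axy\bigr)$ (no truncation). Define the pure-equilibrium region $\{a: b^2\ge a(c-\theta)\}$ (equivalently $a=0$ or $\zeta(a):=\frac{b^2-a(c-\theta)}{a^2}\ge 0$) and the mixed-equilibrium region $\{a: b^2<a(c-\theta)\}$ (equivalently $\zeta(a)<0$). Define equilibrium effort $e(a)$ by: $e(a)=\frac{b-\sqrt{b^2-a(c-\theta)}}{a}$ for $a\neq0$ in the pure region, $e(0)=\frac{c-\theta}{2b}$, and $e(a)=b/a$ on the mixed region (the common mean effort of every mixed equilibrium there). Then $e$ is increasing on the pure-equilibrium region and decreasing on the mixed-equilibrium region. Hence equilibrium effort is maximized at the boundary $\zeta=0$, i.e. at $a$ with $b^2=a(c-\theta)$.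
   Context: On the pure region the unique equilibrium of this contest is the symmetric pure profile with effort $e(a)$ (for $a=0$ each player has the dominant strategy $(c-\theta)/(2b)$); on the mixed region every mixed equilibrium has both players' mean effort equal to $b/a$. *)

From HB Require Import structures.
From mathcomp Require Import all_boot all_order all_algebra.
From mathcomp Require Import reals.
Set Implicit Arguments. Unset Strict Implicit. Unset Printing Implicit Defensive.
Import Order.TTheory GRing.Theory Num.Theory.
Local Open Scope ring_scope.

(* Win probability of player 1 (untruncated): P(x,y) = 1/2 + (x-y)(c - b(x+y) + a x y).
   Recorded for documentation; the theorem concerns the effort function below. *)
Definition contestP (R : realType) (a b c x y : R) : R :=
  2^-1 + (x - y) * (c - b * (x + y) + a * x * y).

Definition zeta (R : realType) (b c theta a : R) : R :=
  (b ^+ 2 - a * (c - theta)) / a ^+ 2.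

Definition pure_region (R : realType) (b c theta a : R) : Prop :=
  a * (c - theta) <= b ^+ 2.

Definition mixed_region (R : realType) (b c theta a : R) : Prop :=
  b ^+ 2 < a * (c - theta).

Definition eff (R : realType) (b c theta a : R) : R :=
  if a == 0 then (c - theta) / (2 * b)
  else if a * (c - theta) <= b ^+ 2
       then (b - Num.sqrt (b ^+ 2 - a * (c - theta))) / a
       else b / a.

From HB Require Import structures.
From mathcomp Require Import all_boot all_order all_algebra.
From mathcomp Require Import reals.
From mathcomp Require Import ring.
Import Order.TTheory GRing.Theory Num.Theory.
Local Open Scope ring_scope.

(* Write k = c - theta. Rationalising, e(a) = k / (b + sqrt(b^2 - a k)) on the
   whole pure region, including a = 0. The square root decreases in a, so e
   increases there, up to e = k / b at the boundary a = b^2 / k. On the mixed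
   region e(a) = b / a decreases in a > 0, and b / a < k / b because
   b^2 < a k. *)

Section EquilibriumEffort.

Variables (R : realType) (b c theta : R).
Hypotheses (b_gt0 : 0 < b) (theta_lt_c : theta < c).

Local Notation k := (c - theta).
Local Notation e := (eff b c theta).

Let k_gt0 : 0 < k. Proof. by rewrite subr_gt0. Qed.

Lemma eff_pure a : pure_region b c theta a ->
  e a = k / (b + Num.sqrt (b ^+ 2 - a * k)).
Proof.
rewrite /pure_region /eff => pure_a; rewrite pure_a.
have [->|a_neq0] := eqVneq a 0.
  by rewrite mul0r subr0 sqrtr_sqr ger0_norm ?(ltW b_gt0) // -mulr2n mulr_natl.
have disc_ge0 : 0 <= b ^+ 2 - a * k by rewrite subr_ge0.
have := sqr_sqrtr disc_ge0; have := sqrtr_ge0 (b ^+ 2 - a * k).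
set s := Num.sqrt _ => s_ge0 s2E.
have bs_gt0 : 0 < b + s := ltr_wpDr s_ge0 b_gt0.
apply/eqP; rewrite eqr_div ?(gt_eqF bs_gt0) //; apply/eqP.
by rewrite -subr_sqr s2E; ring.
Qed.

Lemma mixed_region_gt0 {a} : mixed_region b c theta a -> 0 < a.
Proof.
move=> mixed_a; rewrite -(pmulr_lgt0 _ k_gt0).
by apply: lt_trans mixed_a; rewrite exprn_gt0.
Qed.

Lemma eff_mixed a : mixed_region b c theta a -> e a = b / a.
Proof.
move=> mixed_a; rewrite /eff (gt_eqF (mixed_region_gt0 mixed_a)).
by rewrite leNgt mixed_a.
Qed.

Lemma eff_pure_lt a1 a2 : pure_region b c theta a1 -> pure_region b c theta a2 ->
  a1 < a2 -> e a1 < e a2.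
Proof.
move=> pure1 pure2 lt12; rewrite !eff_pure // ltr_pM2l //.
have sqrt_lt : Num.sqrt (b ^+ 2 - a2 * k) < Num.sqrt (b ^+ 2 - a1 * k).
  rewrite ltr_sqrt ?ltrD2l ?ltrN2 ?ltr_pM2r // subr_gt0.
  by apply: lt_le_trans pure2; rewrite ltr_pM2r.
by rewrite ltf_pV2 ?ltrD2l // posrE ltr_wpDr ?sqrtr_ge0.
Qed.

Lemma eff_mixed_lt a1 a2 : mixed_region b c theta a1 -> mixed_region b c theta a2 ->
  a1 < a2 -> e a2 < e a1.
Proof.
move=> mixed1 mixed2 lt12; rewrite !eff_mixed // ltr_pM2l //.
by rewrite ltf_pV2 // posrE mixed_region_gt0.
Qed.

Lemma eff_boundary : e (b ^+ 2 / k) = k / b.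
Proof.
rewrite eff_pure; last by rewrite /pure_region divfK ?gt_eqF.
by rewrite divfK ?gt_eqF // subrr sqrtr0 addr0.
Qed.

Lemma eff_le_boundary a : e a <= k / b.
Proof.
have [pure_a|mixed_a] := leP (a * k) (b ^+ 2).
  rewrite eff_pure // ler_pM2l // lef_pV2 ?lerDl ?sqrtr_ge0 //.
  by rewrite posrE ltr_wpDr ?sqrtr_ge0.
have a_gt0 := mixed_region_gt0 mixed_a.
rewrite eff_mixed // ler_pdivrMr // mulrAC ler_pdivlMr // -expr2 mulrC.
exact: ltW.
Qed.

End EquilibriumEffort.

Theorem theorem2 (R : realType) (b c theta : R) :
  0 < b -> 0 < c -> 0 < theta -> theta < c ->
  (* e is (strictly) increasing on the pure-equilibrium region *)
  (forall a1 a2 : R, pure_region b c theta a1 -> pure_region b c theta a2 ->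
     a1 < a2 -> eff b c theta a1 < eff b c theta a2) /\
  (* e is (strictly) decreasing on the mixed-equilibrium region *)
  (forall a1 a2 : R, mixed_region b c theta a1 -> mixed_region b c theta a2 ->
     a1 < a2 -> eff b c theta a2 < eff b c theta a1) /\
  (* hence e is maximized at the boundary a* with b^2 = a* (c - theta) *)
  (forall a : R, eff b c theta a <= eff b c theta (b ^+ 2 / (c - theta))).
Proof.
move=> b_gt0 _ _ theta_lt_c; split; first exact: eff_pure_lt.
split; first exact: eff_mixed_lt.
by move=> a; rewrite eff_boundary // eff_le_boundary.
Qed.
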